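(* Let $a<b$ be real numbers and define a sequence $(x_n)_{n\in\mathbb{N}}$ by, for $k\in\mathbb{N}$: $x_{4k-3}=a-2^{-k}$, $x_{4k-2}=b+2^{-k}$, $x_{4k-1}=a-3^{-k}$, $x_{4k}=b+3^{-k}$. Let $X=\{a,b\}\cup\{x_n:n\in\mathbb{N}\}\subset\mathbb{R}$ with the Euclidean metric, and define $T\colon X\to X$ by $T(x_n)=x_{n+1}$ for $n\geqslant1$, $T(a)=b$, $T(b)=a$. Then $T$ is continuous, $T$ is a graphic contraction of order $4$ (the defining inequality holds with any $\alpha\in[\tfrac12,1)$), $T$ is not a graphic contraction of order $1$, $2$ or $3$, and $a,b$ are periodic points of $T$ of prime period $2$.
   Context: Let $(X,d)$ be a nonempty metric space and $n\in\mathbb{N}$. A mapping $T\colon X\to X$ is a graphic contraction of order $n$ if there exists $\alpha\in(0,1)$ such that $d(T^n x,T^{2n}x)\leqslant \alpha\, d(x,T^n x)$ for all $x\in X$, where $T^k$ denotes the $k$-th iterate of $T$. A point $x$ is a periodic point of period $m$ if $T^m x=x$; the least such positive $m$ is its prime period. *)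

From HB Require Import structures.
From mathcomp Require Import all_boot all_order all_algebra.
From mathcomp Require Import all_classical all_reals all_analysis.
Set Implicit Arguments. Unset Strict Implicit. Unset Printing Implicit Defensive.
Import Order.TTheory GRing.Theory Num.Theory.
Import numFieldNormedType.Exports.
Local Open Scope classical_set_scope.
Local Open Scope ring_scope.

(* The sequence x_n, n >= 1 (x_0 is unused; set to a):
   x_{4k-3} = a - 2^-k, x_{4k-2} = b + 2^-k,
   x_{4k-1} = a - 3^-k, x_{4k}   = b + 3^-k   (k >= 1). *)
Definition xseq (R : realType) (a b : R) (n : nat) : R :=
  if n == 0%N then a else
  let k := ((n + 3) %/ 4)%N in
  match ((n + 3) %% 4)%N with
  | 0%N => a - (2 ^+ k)^-1
  | 1%N => b + (2 ^+ k)^-1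
  | 2%N => a - (3 ^+ k)^-1
  | _ => b + (3 ^+ k)^-1
  end.

Definition Xset (R : realType) (a b : R) : set R :=
  [set y | y = a \/ y = b \/ exists n : nat, (0 < n)%N /\ y = xseq a b n].

Definition graphic_contraction_ineq (R : realType) (X : set R) (T : R -> R)
    (n : nat) (alpha : R) : Prop :=
  forall x, X x -> `|iter n T x - iter (2 * n) T x| <= alpha * `|x - iter n T x|.

Definition graphic_contraction (R : realType) (X : set R) (T : R -> R)
    (n : nat) : Prop :=
  exists alpha : R, 0 < alpha < 1 /\ graphic_contraction_ineq X T n alpha.

Definition prime_period (R : realType) (T : R -> R) (x : R) (m : nat) : Prop :=
  (0 < m)%N /\ iter m T x = x /\ forall k, (0 < k < m)%N -> iter k T x <> x.

From HB Require Import structures.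
From mathcomp Require Import all_boot all_order all_algebra.
From mathcomp Require Import all_classical all_reals all_analysis.
From mathcomp Require Import zify ring lra.
Set Implicit Arguments. Unset Strict Implicit. Unset Printing Implicit Defensive.
Import Order.TTheory GRing.Theory Num.Theory.
Import numFieldNormedType.Exports.
Local Open Scope classical_set_scope.
Local Open Scope ring_scope.

(* On X the map T swaps a and b, acts as the reflection z |-> a + b - z on the
   points left of a, and sends b + 2^-k, b + 3^-k to a - 3^-k, a - 2^-(k+1).
   The points right of b are isolated in X (distinct reciprocals of integers
   are quantitatively apart), and their images tend to a = T b, so T is
   continuous.  Four steps of T move along each of the four subsequences
   x_(4k+r), whose distance to its limit shrinks by 1/2 or 1/3; hence the
   order-4 inequality with any alpha >= 1/2.  The 2-cycle {a, b} gives
   |T^n a - T^2n a| = |a - T^n a| for odd n, and order 2 fails at x_3 since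
   |x_5 - x_7| = 5/36 > 1/12 = |x_3 - x_5|. *)

Lemma iter_two_cycle (T : Type) (f : T -> T) (x : T) n :
  f (f x) = x -> iter n f x = if odd n then f x else x.
Proof. by move=> ffx; elim: n => //= n ->; case: (odd n). Qed.

Lemma two_cycle_prime_period (R : realType) (T : R -> R) x :
  T (T x) = x -> T x != x -> prime_period T x 2.
Proof. by move=> TTx /eqP Tx_neq; do 2!split=> //; case=> [|[|]]. Qed.

Lemma two_cycle_not_graphic_contraction (R : realType) (X : set R) (T : R -> R) x n :
  X x -> T (T x) = x -> T x != x -> odd n -> ~ graphic_contraction X T n.
Proof.
move=> Xx TTx Tx_neq odd_n [alpha [/andP[_ alpha_lt1] contr]].
have := contr x Xx; rewrite !iter_two_cycle // oddM odd_n /= distrC.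
have : 0 < `|x - T x| by rewrite normr_gt0 subr_eq0 eq_sym.
nra.
Qed.

Lemma dist_invf_ge (R : realFieldType) (p q : R) : 1 <= p -> 1 <= q -> 1 <= `|p - q| ->
  (2 * p ^+ 2)^-1 <= `|p^-1 - q^-1|.
Proof.
move=> p_ge1 q_ge1 pq_ge1.
have q_le : q <= 2 * p * `|p - q|.
  have [pq|qp] := lerP p q.
    by move: pq_ge1; rewrite ler0_norm ?subr_le0 // opprB => ?; nra.
  by move: pq_ge1; rewrite gtr0_norm ?subr_gt0 // => ?; nra.
have -> : p^-1 - q^-1 = (q - p) / (p * q) by field; rewrite !gt_eqF //; lra.
rewrite normf_div distrC (ger0_norm (_ : 0 <= p * q)); last by nra.
rewrite ler_pdivlMr; last by nra.
by rewrite mulrC ler_pdivrMr; nra.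
Qed.

Lemma dist_expVn_contract (R : numFieldType) (c alpha : R) k : 2 <= c -> 1 / 2 <= alpha ->
  `|c ^- k.+1 - c ^- k.+2| <= alpha * `|c ^- k - c ^- k.+1|.
Proof.
move=> c_ge2 alpha_ge; have c_gt0 : 0 < c by apply: lt_le_trans c_ge2.
have -> : c ^- k.+1 - c ^- k.+2 = c^-1 * (c ^- k - c ^- k.+1).
  by rewrite !exprS !invfM; ring.
rewrite normrM ler_wpM2r // ger0_norm ?invr_ge0 ?(ltW c_gt0) //.
by apply: le_trans _ alpha_ge; rewrite mul1r lef_pV2 ?posrE.
Qed.

Lemma distDl (R : numDomainType) (u p q : R) : `|(u + p) - (u + q)| = `|p - q|.
Proof. by rewrite opprD addrACA subrr add0r. Qed.

Lemma distBl (R : numDomainType) (u p q : R) : `|(u - p) - (u - q)| = `|p - q|.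
Proof. by rewrite distDl -opprD normrN. Qed.

Lemma natr_dist_ge1 (R : numDomainType) (m n : nat) : m != n -> 1 <= `|m%:R - n%:R : R|.
Proof.
have [lt_mn|lt_nm|->] := ltngtP m n; rewrite ?eqxx // => _.
- by rewrite distrC -natrB ?normr_nat ?ler1n ?subn_gt0 // ltnW.
- by rewrite -natrB ?normr_nat ?ler1n ?subn_gt0 // ltnW.
Qed.

Lemma ler_expVn2l (R : numFieldType) (c : R) m n : 1 < c -> (c ^- m <= c ^- n) = (n <= m)%N.
Proof.
move=> c_gt1; have c_gt0 : 0 < c by apply: lt_trans c_gt1.
by rewrite lef_pV2 ?posrE ?exprn_gt0 // ler_eXn2l.
Qed.

Lemma ltr_expVn2l (R : numFieldType) (c : R) m n : 1 < c -> (c ^- m < c ^- n) = (n < m)%N.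
Proof.
move=> c_gt1; have c_gt0 : 0 < c by apply: lt_trans c_gt1.
by rewrite ltf_pV2 ?posrE ?exprn_gt0 // ltr_eXn2l.
Qed.

Lemma ler_expVn2r (R : numFieldType) (c d : R) n : 0 < c <= d -> d ^- n <= c ^- n.
Proof.
case/andP=> c_gt0 c_le_d; have d_gt0 : 0 < d by apply: lt_le_trans c_le_d.
by rewrite lef_pV2 ?posrE ?exprn_gt0 // lerXn2r ?nnegrE ?(ltW c_gt0) ?(ltW d_gt0).
Qed.

Lemma within_continuous_eps (R : realType) (A : set R) (f : R -> R) :
  (forall x, A x -> forall e, 0 < e ->
     exists2 d, 0 < d & forall y, A y -> `|x - y| < d -> `|f x - f y| < e) ->
  {within A, continuous f}.
Proof.
move=> feps; apply/subspace_continuousP => x Ax; apply/cvgrPdist_lt => e e_gt0.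
have [d d_gt0 fd] := feps x Ax e e_gt0.
by rewrite near_withinE; exists d => //= y xy Ay; exact: fd.
Qed.

Lemma nat_mod4_cases n : (0 < n)%N ->
  exists k, [\/ n = 4 * k + 1, n = 4 * k + 2, n = 4 * k + 3 | n = 4 * k + 4]%N.
Proof.
move=> n_gt0; exists ((n - 1) %/ 4)%N.
have := ltn_pmod (n - 1) (isT : (0 < 4)%N); have := divn_eq (n - 1) 4.
by case: ((n - 1) %% 4)%N => [|[|[|[|r]]]] E ? //;
  [constructor 1 | constructor 2 | constructor 3 | constructor 4]; lia.
Qed.

Section Counterexample.
Variables (R : realType) (a b : R) (T : R -> R).

Lemma xseq_4k1 k : xseq a b (4 * k + 1) = a - 2 ^- k.+1.
Proof.
rewrite /xseq (_ : (4 * k + 1 == 0)%N = false); last by lia.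
rewrite (_ : ((4 * k + 1 + 3) %/ 4 = k.+1)%N); last by lia.
by rewrite (_ : ((4 * k + 1 + 3) %% 4 = 0)%N); last by lia.
Qed.

Lemma xseq_4k2 k : xseq a b (4 * k + 2) = b + 2 ^- k.+1.
Proof.
rewrite /xseq (_ : (4 * k + 2 == 0)%N = false); last by lia.
rewrite (_ : ((4 * k + 2 + 3) %/ 4 = k.+1)%N); last by lia.
by rewrite (_ : ((4 * k + 2 + 3) %% 4 = 1)%N); last by lia.
Qed.

Lemma xseq_4k3 k : xseq a b (4 * k + 3) = a - 3 ^- k.+1.
Proof.
rewrite /xseq (_ : (4 * k + 3 == 0)%N = false); last by lia.
rewrite (_ : ((4 * k + 3 + 3) %/ 4 = k.+1)%N); last by lia.
by rewrite (_ : ((4 * k + 3 + 3) %% 4 = 2)%N); last by lia.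
Qed.

Lemma xseq_4k4 k : xseq a b (4 * k + 4) = b + 3 ^- k.+1.
Proof.
rewrite /xseq (_ : (4 * k + 4 == 0)%N = false); last by lia.
rewrite (_ : ((4 * k + 4 + 3) %/ 4 = k.+1)%N); last by lia.
by rewrite (_ : ((4 * k + 4 + 3) %% 4 = 3)%N); last by lia.
Qed.

Hypotheses (lt_ab : a < b)
  (T_xseq : forall n, (0 < n)%N -> T (xseq a b n) = xseq a b n.+1)
  (Ta : T a = b) (Tb : T b = a).

Lemma iter_T_xseq n m : (0 < n)%N -> iter m T (xseq a b n) = xseq a b (n + m).
Proof.
move=> n_gt0; elim: m => [|m IH]; first by rewrite addn0.
by rewrite iterS IH T_xseq ?addnS // ltn_addr.
Qed.

Variant Xset_spec (z : R) : Prop :=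
  | XsetLeft of z <= a & T z = a + b - z
  | XsetB of z = b
  | XsetRight2 k of z = b + 2 ^- k.+1 & T z = a - 3 ^- k.+1
  | XsetRight3 k of z = b + 3 ^- k.+1 & T z = a - 2 ^- k.+2.

Lemma XsetP z : Xset a b z -> Xset_spec z.
Proof.
case=> [->|[->|[n [n_gt0 ->]]]]; first by apply: XsetLeft; rewrite // Ta addrAC subrr add0r.
  exact: XsetB.
have pos (c : R) k : 0 < c -> 0 < c ^- k by move=> ?; rewrite invr_gt0 exprn_gt0.
have [k [->|->|->|->]] := nat_mod4_cases n_gt0;
  rewrite ?xseq_4k1 ?xseq_4k2 ?xseq_4k3 ?xseq_4k4.
- have ? := pos 2 k.+1 (ltr0Sn _ _); apply: XsetLeft; first lra.
  by rewrite -[in T _]xseq_4k1 T_xseq ?addn_gt0 ?orbT // -addnS xseq_4k2; lra.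
- apply: (XsetRight2 erefl).
  by rewrite -[in T _]xseq_4k2 T_xseq ?addn_gt0 ?orbT // -addnS xseq_4k3.
- have ? := pos 3 k.+1 (ltr0Sn _ _); apply: XsetLeft; first lra.
  by rewrite -[in T _]xseq_4k3 T_xseq ?addn_gt0 ?orbT // -addnS xseq_4k4; lra.
- apply: (XsetRight3 erefl).
  rewrite -[in T _]xseq_4k4 T_xseq ?addn_gt0 ?orbT //.
  by rewrite (_ : (4 * k + 4).+1 = 4 * k.+1 + 1)%N ?xseq_4k1 //; lia.
Qed.

Lemma T_lt_b z : Xset a b z -> z < b -> T z = a + b - z.
Proof.
have pos (c : R) k : 0 < c -> 0 < c ^- k by move=> ?; rewrite invr_gt0 exprn_gt0.
case/XsetP=> [// _ | -> | k -> _ | k -> _]; rewrite ?ltxx // => /ltW.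
- by rewrite gerDl leNgt pos.
- by rewrite gerDl leNgt pos.
Qed.

Lemma xseq_graphic_contraction4 n alpha : (0 < n)%N -> 1 / 2 <= alpha ->
  `|xseq a b (n + 4) - xseq a b (n + 8)| <= alpha * `|xseq a b n - xseq a b (n + 4)|.
Proof.
move=> n_gt0 alpha_ge.
have c2 : (2 : R) <= 2 by [].
have c3 : (2 : R) <= 3 by rewrite ler_nat.
have [k [->|->|->|->]] := nat_mod4_cases n_gt0.
- rewrite (_ : (4 * k + 1 + 4 = 4 * k.+1 + 1)%N); last by lia.
  rewrite (_ : (4 * k + 1 + 8 = 4 * k.+2 + 1)%N); last by lia.
  by rewrite !xseq_4k1 !distBl dist_expVn_contract.
- rewrite (_ : (4 * k + 2 + 4 = 4 * k.+1 + 2)%N); last by lia.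
  rewrite (_ : (4 * k + 2 + 8 = 4 * k.+2 + 2)%N); last by lia.
  by rewrite !xseq_4k2 !distDl dist_expVn_contract.
- rewrite (_ : (4 * k + 3 + 4 = 4 * k.+1 + 3)%N); last by lia.
  rewrite (_ : (4 * k + 3 + 8 = 4 * k.+2 + 3)%N); last by lia.
  by rewrite !xseq_4k3 !distBl dist_expVn_contract.
- rewrite (_ : (4 * k + 4 + 4 = 4 * k.+1 + 4)%N); last by lia.
  rewrite (_ : (4 * k + 4 + 8 = 4 * k.+2 + 4)%N); last by lia.
  by rewrite !xseq_4k4 !distDl dist_expVn_contract.
Qed.

Lemma TTa : T (T a) = a. Proof. by rewrite Ta Tb. Qed.
Lemma TTb : T (T b) = b. Proof. by rewrite Tb Ta. Qed.
Lemma Ta_neq : T a != a. Proof. by rewrite Ta gt_eqF. Qed.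
Lemma Tb_neq : T b != b. Proof. by rewrite Tb lt_eqF. Qed.

Lemma graphic_contraction_ineq4 alpha : 1 / 2 <= alpha ->
  graphic_contraction_ineq (Xset a b) T 4 alpha.
Proof.
move=> alpha_ge z [| [|[n [n_gt0 ->]]]].
- by move=> ->; rewrite !iter_two_cycle ?TTa // subrr normr0 mulr_ge0 //; lra.
- by move=> ->; rewrite !iter_two_cycle ?TTb // subrr normr0 mulr_ge0 //; lra.
- by rewrite !iter_T_xseq // xseq_graphic_contraction4.
Qed.

Lemma not_graphic_contraction2 : ~ graphic_contraction (Xset a b) T 2.
Proof.
move=> [alpha [/andP[_ alpha_lt1] contr]].
have X3 : Xset a b (xseq a b 3) by right; right; exists 3%N.
have := contr _ X3; rewrite !iter_T_xseq // (xseq_4k3 0).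
rewrite (_ : (3 + 2 = 4 * 1 + 1)%N) // (_ : (3 + 2 * 2 = 4 * 1 + 3)%N) // xseq_4k1 xseq_4k3 !distBl.
rewrite (_ : 2 ^- 2 - 3 ^- 2 = 5 / 36); last by rewrite !expr2; field.
rewrite (_ : 3 ^- 1 - 2 ^- 2 = 1 / 12); last by rewrite expr2 expr1; field.
rewrite !ger0_norm //; lra.
Qed.

Lemma Xset_isolated P : (0 < P)%N ->
  exists2 d, 0 < d & forall z, Xset a b z -> `|b + P%:R^-1 - z| < d -> z = b + P%:R^-1.
Proof.
move=> P_gt0; have P_ge1 : (1 : R) <= P%:R by rewrite ler1n.
have ab_gt0 : 0 < b - a by rewrite subr_gt0.
exists (Num.min (b - a) (2 * P%:R ^+ 2)^-1).
  by rewrite lt_min ab_gt0 invr_gt0 mulr_gt0 ?exprn_gt0 //; lra.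
move=> z Xz; rewrite lt_min => /andP[near_ab near_P].
have gap Q : (0 < Q)%N -> z = b + Q%:R^-1 -> z = b + P%:R^-1.
  move=> Q_gt0 z_eq; rewrite z_eq; have [-> //|neq_PQ] := eqVneq P Q.
  move: near_P; rewrite z_eq distDl ltNge => /negP[].
  by apply: dist_invf_ge; rewrite ?ler1n ?natr_dist_ge1.
have P_inv_gt0 : 0 < P%:R^-1 :> R by rewrite invr_gt0; lra.
case/XsetP: Xz near_ab near_P gap => [z_le_a _ | -> | k -> _ | k -> _] near_ab near_P gap.
- by exfalso; move: near_ab; rewrite ger0_norm; lra.
- move: near_P; rewrite (addrC b) addrK gtr0_norm // ltNge => /negP[].
  by rewrite lef_pV2 ?posrE ?mulr_gt0 ?exprn_gt0 //; nra.
- by apply: (gap (2 ^ k.+1)%N); rewrite ?expn_gt0 // natrX.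
- by apply: (gap (3 ^ k.+1)%N); rewrite ?expn_gt0 // natrX.
Qed.

Lemma T_near_left y (e : R) : Xset a b y -> y <= a -> 0 < e ->
  exists2 d, 0 < d & forall z, Xset a b z -> `|y - z| < d -> `|T y - T z| < e.
Proof.
move=> Xy y_le_a e_gt0; have ab_gt0 : 0 < b - a by rewrite subr_gt0.
exists (Num.min e (b - a)); first by rewrite lt_min e_gt0.
move=> z Xz; rewrite lt_min => /andP[near_e near_ab].
have z_lt_b : z < b by move: near_ab; rewrite ltr_norml => /andP[? _]; lra.
by rewrite (T_lt_b Xy (le_lt_trans y_le_a lt_ab)) (T_lt_b Xz z_lt_b) distBl.
Qed.

Lemma T_near_b (e : R) : 0 < e ->
  exists2 d, 0 < d & forall z, Xset a b z -> `|b - z| < d -> `|T b - T z| < e.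
Proof.
move=> e_gt0; have ab_gt0 : 0 < b - a by rewrite subr_gt0.
pose K := Num.bound e^-1.
have K_small : 2 ^- K.+1 < e.
  by rewrite invf_plt ?posrE ?exprn_gt0 // upper_nthrootP.
(* T is not Lipschitz at b: b + 3^-(k+1) is sent to a - 2^-(k+2), so for
   these points we compare exponents rather than distances. *)
exists (Num.min (b - a) (3 ^- K.+1)); first by rewrite lt_min ab_gt0 invr_gt0 exprn_gt0.
move=> z Xz; rewrite lt_min Tb => /andP[near_ab near_K].
case/XsetP: Xz near_ab near_K => [z_le_a _ | -> | k -> -> | k -> ->] near_ab near_K.
- by exfalso; move: near_ab; rewrite ger0_norm; lra.
- by rewrite Tb subrr normr0.
- move: near_K; rewrite opprD addNKr normrN subKr !gtr0_norm ?invr_gt0 ?exprn_gt0 // => near_K.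
  have le23 m : 3 ^- m <= 2 ^- m :> R by apply: ler_expVn2r; rewrite ltr0n ler_nat.
  have := le23 k.+1; have := le23 K.+1; lra.
- move: near_K; rewrite opprD addNKr normrN subKr !gtr0_norm ?invr_gt0 ?exprn_gt0 //.
  rewrite ltr_expVn2l ?ltr1n // => lt_Kk.
  by apply: le_lt_trans K_small; rewrite ler_expVn2l ?ltr1n //; lia.
Qed.

Lemma T_continuous : {within Xset a b, continuous T}.
Proof.
apply: within_continuous_eps => y Xy e e_gt0.
have T_near_isolated P : (0 < P)%N -> exists2 d, 0 < d & forall z, Xset a b z ->
    `|b + P%:R^-1 - z| < d -> `|T (b + P%:R^-1) - T z| < e.
  case/Xset_isolated=> d d_gt0 isolated; exists d => // z Xz /(isolated _ Xz) ->.
  by rewrite subrr normr0.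
case/XsetP: (Xy) => [y_le_a _ | -> | k -> _ | k -> _].
- exact: T_near_left.
- exact: T_near_b.
- by rewrite -natrX; apply: T_near_isolated; rewrite expn_gt0.
- by rewrite -natrX; apply: T_near_isolated; rewrite expn_gt0.
Qed.

End Counterexample.

Theorem mainTheorem3 (R : realType) (a b : R) (T : R -> R) :
  a < b ->
  (forall n : nat, (0 < n)%N -> T (xseq a b n) = xseq a b n.+1) ->
  T a = b -> T b = a ->
  [/\ {within Xset a b, continuous T},
      graphic_contraction (Xset a b) T 4,
      (forall alpha : R, 1 / 2 <= alpha < 1 ->
         graphic_contraction_ineq (Xset a b) T 4 alpha),
      (forall n : nat, (n \in [:: 1; 2; 3]%N) ->
         ~ graphic_contraction (Xset a b) T n)
    & prime_period T a 2 /\ prime_period T b 2].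
Proof.
move=> lt_ab T_xseq Ta Tb.
have Xa : Xset a b a by left.
split.
- exact: T_continuous.
- exists (1 / 2); split; first by apply/andP; split; lra.
  exact: graphic_contraction_ineq4.
- by move=> alpha /andP[alpha_ge _]; apply: graphic_contraction_ineq4.
- move=> n; rewrite !inE => /or3P[] /eqP->.
  + by apply: (two_cycle_not_graphic_contraction Xa (TTa Ta Tb) (Ta_neq lt_ab Ta)).
  + exact: not_graphic_contraction2.
  + by apply: (two_cycle_not_graphic_contraction Xa (TTa Ta Tb) (Ta_neq lt_ab Ta)).
- split; apply: two_cycle_prime_period.
  + exact: TTa Ta Tb.
  + exact: Ta_neq lt_ab Ta.
  + exact: TTb Ta Tb.
  + exact: Tb_neq lt_ab Tb.
Qed.
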